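(* Let $v=(v_{ij})$ be a complex $2\times2$ matrix with $\|v\|=1$ (i.e. $v\in\partial\mathcal R_I$). If $\pi(v)\in\partial\mathbb E$, then $|v_{12}|=|v_{21}|$.
   Context: $\|\cdot\|$ is the operator norm on $2\times2$ complex matrices, $\mathcal R_I=\{x:\|x\|<1\}$, $\pi(x)=(x_{11},x_{22},\det x)$, and the tetrablock is $\mathbb E=\pi(\mathcal R_I)=\{z\in\mathbb C^3:\ |z_2-\bar z_1z_3|+|z_1z_2-z_3|+|z_1|^2<1\}$. *)

From HB Require Import structures.
From mathcomp Require Import all_boot all_order all_algebra.
From mathcomp Require Import complex.
From mathcomp Require Import classical_sets reals.
Set Implicit Arguments. Unset Strict Implicit. Unset Printing Implicit Defensive.
Import Order.TTheory GRing.Theory Num.Theory.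
Local Open Scope ring_scope.
Local Open Scope classical_set_scope.

Section Tetrablock.
Variable R : realType.
Local Notation C := (R[i]).

Definition cabs (z : C) : R := Num.sqrt (complex.Re z ^+ 2 + complex.Im z ^+ 2).

Definition vnorm (u : 'cV[C]_2) : R :=
  Num.sqrt (cabs (u 0 0) ^+ 2 + cabs (u 1 0) ^+ 2).

Definition opnorm (x : 'M[C]_2) : R :=
  sup [set vnorm (x *m u) | u in [set u : 'cV[C]_2 | vnorm u = 1]].

Definition piT (x : 'M[C]_2) : C * C * C := (x 0 0, x 1 1, \det x).

Definition tetrablock : set (C * C * C) :=
  [set piT x | x in [set x : 'M[C]_2 | opnorm x < 1]].

(* max-distance on C^3 (induces the standard topology of C^3) *)
Definition dist3 (z w : C * C * C) : R :=
  Num.max (cabs (z.1.1 - w.1.1)) (Num.max (cabs (z.1.2 - w.1.2)) (cabs (z.2 - w.2))).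

Definition closure3 (S : set (C * C * C)) : set (C * C * C) :=
  [set z | forall e : R, 0 < e -> exists w, S w /\ dist3 z w < e].

Definition interior3 (S : set (C * C * C)) : set (C * C * C) :=
  [set z | exists e : R, 0 < e /\ forall w, dist3 z w < e -> S w].

Definition boundary3 (S : set (C * C * C)) : set (C * C * C) :=
  [set z | closure3 S z /\ ~ interior3 S z].

End Tetrablock.

From HB Require Import structures.
From mathcomp Require Import all_boot all_order all_algebra.
From mathcomp Require Import complex.
From mathcomp Require Import classical_sets reals.
From mathcomp Require Import boolp ring lra.
Set Implicit Arguments. Unset Strict Implicit. Unset Printing Implicit Defensive.
Import Order.TTheory GRing.Theory Num.Theory.
Local Open Scope ring_scope.
Local Open Scope complex_scope.

(* Since ||v|| = 1, the matrix 1 - v^* v is positive semidefinite: its trace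
   2 - |v|_F^2 and its determinant 1 - |v|_F^2 + |det v|^2 are nonnegative.
   Conversely a 2x2 matrix for which both are positive has norm < 1.
   Conjugating v by diag(1, s) replaces v12, v21 by s v12, v21 / s and keeps
   pi(v); if |v12| <> |v21|, a suitable s > 0 strictly lowers the Frobenius
   norm and so makes both quantities positive. Keeping a nonzero off-diagonal
   entry fixed (after transposing if necessary), the other entries are
   continuous functions of the point of C^3 that pi must hit, so a whole
   neighbourhood of pi(v) lies in E, contradicting pi(v) being a boundary
   point. *)

Section Tetrablock.
Variable R : realType.
Local Notation C := (R[i]).
Local Notation Re := (@complex.Re R).
Local Notation Im := (@complex.Im R).
Local Notation T3 := (C * C * C)%type.
Implicit Types (x : 'M[C]_2) (u : 'cV[C]_2).

Definition normc2 (z : C) : R := Re z ^+ 2 + Im z ^+ 2.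

Lemma normc2_ge0 z : 0 <= normc2 z.
Proof. by rewrite addr_ge0 ?sqr_ge0. Qed.

Lemma cabsE z : cabs z = Num.sqrt (normc2 z).
Proof. by []. Qed.

Lemma cabs_sqr z : cabs z ^+ 2 = normc2 z.
Proof. by rewrite cabsE sqr_sqrtr // normc2_ge0. Qed.

Lemma normc2_eq0 z : (normc2 z == 0) = (z == 0).
Proof.
by case: z => x y; rewrite /normc2 paddr_eq0 ?sqr_ge0 // !sqrf_eq0 eq_complex.
Qed.

Lemma normc2_scale (k : R) z : normc2 (k%:C * z) = k ^+ 2 * normc2 z.
Proof. by case: z => x y; rewrite /normc2 /=; ring. Qed.

Lemma normc2_0 : normc2 0 = 0.
Proof. by apply/eqP; rewrite normc2_eq0. Qed.

Lemma normc2_1 : normc2 1 = 1.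
Proof. by rewrite /normc2 /= expr1n expr0n addr0. Qed.

(* [hform a b d] is the form u |-> <M u, u> of M = [[a, b], [b^*, d]]. *)
Definition hform (a : R) (b : C) (d : R) (w1 w2 : C) : R :=
  a * normc2 w1 + d * normc2 w2 + 2 * Re (b * w1^* * w2).

Lemma hform_sqr1 a b d w1 w2 : a * hform a b d w1 w2 =
  normc2 (a%:C * w1 + b * w2) + (a * d - normc2 b) * normc2 w2.
Proof. by move: b w1 w2 => [? ?] [? ?] [? ?]; rewrite /hform /normc2 /=; ring. Qed.

Lemma hform_sqr2 a b d w1 w2 : d * hform a b d w1 w2 =
  normc2 (d%:C * w2 + b^* * w1) + (a * d - normc2 b) * normc2 w1.
Proof. by move: b w1 w2 => [? ?] [? ?] [? ?]; rewrite /hform /normc2 /=; ring. Qed.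

Lemma hform_psd a b d : (forall w1 w2, 0 <= hform a b d w1 w2) ->
  [/\ 0 <= a, 0 <= d & normc2 b <= a * d].
Proof.
move=> psd.
have ha : 0 <= a.
  by rewrite (_ : a = hform a b d 1 0) //; case: b {psd} => ? ?; rewrite /hform /normc2 /=; ring.
have hd : 0 <= d.
  by rewrite (_ : d = hform a b d 0 1) //; case: b {psd} => ? ?; rewrite /hform /normc2 /=; ring.
split=> //; rewrite -subr_ge0.
have [a_gt0|a_le0] := ltrP 0 a.
  have := hform_sqr1 a b d (- (b * a^-1%:C)) 1.
  rewrite mulrN mulrCA -rmorphM mulfV ?gt_eqF // mulr1 addNr normc2_0 normc2_1.
  by rewrite add0r mulr1 => <-; rewrite mulr_ge0.
have [d_gt0|d_le0] := ltrP 0 d.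
  have := hform_sqr2 a b d 1 (- (b^* * d^-1%:C)).
  rewrite mulrN mulrCA -rmorphM mulfV ?gt_eqF // mulr1 addNr normc2_0 normc2_1.
  by rewrite add0r mulr1 => <-; rewrite mulr_ge0.
have -> : a = 0 by apply/eqP; rewrite eq_le a_le0 ha.
have -> : d = 0 by apply/eqP; rewrite eq_le d_le0 hd.
(* at u = (1, -b^* ) a degenerate form takes the value -2|b|^2 *)
move: (psd 1 (- b^*)); case: b {psd} => ? ?; rewrite /hform /normc2 /= => h; nra.
Qed.

Lemma hform_ge a b d w1 w2 :
  (a * d - normc2 b) * (normc2 w1 + normc2 w2) <= (a + d) * hform a b d w1 w2.
Proof.
rewrite [(a + d) * _]mulrDl hform_sqr1 hform_sqr2.
have := normc2_ge0 (a%:C * w1 + b * w2); have := normc2_ge0 (d%:C * w2 + b^* * w1).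
lra.
Qed.

Lemma det_mx2 (x : 'M[C]_2) : \det x = x 0 0 * x 1 1 - x 0 1 * x 1 0.
Proof.
rewrite (expand_det_row _ 0) !big_ord_recl big_ord0 addr0 /cofactor !det_mx11 /=.
rewrite !mxE /= !expr0 expr1 !mul1r mulN1r mulrN.
congr (_ * x _ _ - _ * x _ _); try congr (x _ _); by apply/eqP.
Qed.

Definition mx22 (a b c d : C) : 'M[C]_2 :=
  \matrix_(i, j) if i == 0 then (if j == 0 then a else b) else (if j == 0 then c else d).

Lemma mx22_entries (x : 'M[C]_2) : mx22 (x 0 0) (x 0 1) (x 1 0) (x 1 1) = x.
Proof.
apply/matrixP => i j; rewrite mxE.
by case: i j => [[|[|//]] ?] [[|[|//]] ?] /=; congr (x _ _); apply/eqP.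
Qed.

Lemma piT_mx22 a b c d : piT (mx22 a b c d) = (a, d, a * d - b * c).
Proof. by rewrite /piT det_mx2 !mxE. Qed.

Definition col2 (w1 w2 : C) : 'cV[C]_2 := \col_i (if i == 0 then w1 else w2).

Lemma mulmx_col2 (x : 'M[C]_2) (u : 'cV[C]_2) i :
  (x *m u) i 0 = x i 0 * u 0 0 + x i 1 * u 1 0.
Proof. by rewrite mxE !big_ord_recl big_ord0 addr0; congr (_ + x _ _ * u _ _); apply/eqP. Qed.

Definition vnorm2 (u : 'cV[C]_2) : R := normc2 (u 0 0) + normc2 (u 1 0).

Lemma vnorm2_ge0 u : 0 <= vnorm2 u.
Proof. by rewrite addr_ge0 ?normc2_ge0. Qed.

Lemma vnormE u : vnorm u = Num.sqrt (vnorm2 u).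
Proof. by rewrite /vnorm !cabs_sqr. Qed.

Lemma vnorm2_unit u : vnorm u = 1 -> vnorm2 u = 1.
Proof. by rewrite vnormE => h; rewrite -(sqr_sqrtr (vnorm2_ge0 u)) h expr1n. Qed.

Lemma vnorm2Z (k : R) u : vnorm2 (k%:C *: u) = k ^+ 2 * vnorm2 u.
Proof. by rewrite /vnorm2 !mxE !normc2_scale -mulrDr. Qed.

(* [opnorm x] is a [sup], which is 0 on sets without a supremum:
   [opnorm x != 0] is what makes it an upper bound. *)
Lemma opnorm_ub x u : opnorm x != 0 -> vnorm u = 1 -> vnorm (x *m u) <= opnorm x.
Proof.
move=> x_neq0 u_unit; apply: sup_upper_bound; last by exists u.
by apply: contraPP x_neq0 => /sup_out hsup; rewrite /opnorm hsup eqxx.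
Qed.

Lemma vnorm2_mulmx_le x u : opnorm x != 0 ->
  vnorm2 (x *m u) <= opnorm x ^+ 2 * vnorm2 u.
Proof.
move=> x_neq0; have [u0|u_neq0] := eqVneq (vnorm2 u) 0.
  have [/eqP e0 /eqP e1] : u 0 0 == 0 /\ u 1 0 == 0.
    rewrite -!normc2_eq0; move: u0 (normc2_ge0 (u 0 0)) (normc2_ge0 (u 1 0)).
    by rewrite /vnorm2 => ? ? ?; split; apply/eqP; lra.
  by rewrite u0 mulr0 /vnorm2 !mulmx_col2 e0 e1 !mulr0 !addr0 normc2_0 addr0.
have u_gt0 : 0 < vnorm2 u by rewrite lt0r u_neq0 vnorm2_ge0.
set k := (Num.sqrt (vnorm2 u))^-1.
have k2 : k ^+ 2 * vnorm2 u = 1.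
  by rewrite exprVn sqr_sqrtr ?mulVf // ltW.
have := opnorm_ub x_neq0 (_ : vnorm (k%:C *: u) = 1).
rewrite vnormE vnorm2Z k2 sqrtr1 => /(_ erefl).
rewrite -scalemxAr vnormE vnorm2Z.
set s := k ^+ 2 * vnorm2 (x *m u) => hs.
have s_le : s <= opnorm x ^+ 2.
  have s_ge0 : 0 <= s by rewrite mulr_ge0 ?sqr_ge0 ?vnorm2_ge0.
  by have := sqrtr_ge0 s; have := sqr_sqrtr s_ge0; nra.
have -> : vnorm2 (x *m u) = s * vnorm2 u by rewrite /s mulrAC k2 mul1r.
by rewrite ler_wpM2r ?vnorm2_ge0.
Qed.

Lemma opnorm_le x k : 0 <= k -> (forall u, vnorm2 (x *m u) <= k * vnorm2 u) ->
  opnorm x <= Num.sqrt k.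
Proof.
move=> k_ge0 hk; apply: ge_sup.
  exists (vnorm (x *m col2 1 0)), (col2 1 0) => //=.
  by rewrite vnormE /vnorm2 !mxE /= normc2_1 normc2_0 addr0 sqrtr1.
move=> _ [u /vnorm2_unit u_unit <-]; rewrite vnormE ler_sqrt //.
by have := hk u; rewrite u_unit mulr1.
Qed.

(** * The defect [1 - x^* x] of a matrix *)

Definition defect11 (x : 'M[C]_2) : R := 1 - normc2 (x 0 0) - normc2 (x 1 0).
Definition defect12 (x : 'M[C]_2) : C := - ((x 0 0)^* * x 0 1 + (x 1 0)^* * x 1 1).
Definition defect22 (x : 'M[C]_2) : R := 1 - normc2 (x 0 1) - normc2 (x 1 1).

Lemma hform_defect x u : hform (defect11 x) (defect12 x) (defect22 x) (u 0 0) (u 1 0) =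
  vnorm2 u - vnorm2 (x *m u).
Proof.
rewrite /hform /defect11 /defect12 /defect22 /vnorm2 !mulmx_col2.
move: (x 0 0) (x 0 1) (x 1 0) (x 1 1) (u 0 0) (u 1 0).
by move=> [? ?] [? ?] [? ?] [? ?] [? ?] [? ?]; rewrite /normc2 /=; ring.
Qed.

Definition frob2 (x : 'M[C]_2) : R :=
  normc2 (x 0 0) + normc2 (x 0 1) + normc2 (x 1 0) + normc2 (x 1 1).

(* trace and determinant of [1 - x^* x] *)
Definition tr_defect x := 2 - frob2 x.
Definition det_defect x := 1 - frob2 x + normc2 (\det x).

Lemma tr_defectE x : tr_defect x = defect11 x + defect22 x.
Proof. by rewrite /tr_defect /frob2 /defect11 /defect22; ring. Qed.

Lemma det_defectE x : det_defect x = defect11 x * defect22 x - normc2 (defect12 x).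
Proof.
rewrite /det_defect /frob2 /defect11 /defect12 /defect22 det_mx2.
by move: (x 0 0) (x 0 1) (x 1 0) (x 1 1) => [? ?] [? ?] [? ?] [? ?]; rewrite /normc2 /=; ring.
Qed.

Lemma opnorm1_defects_ge0 x : opnorm x = 1 -> 0 <= tr_defect x /\ 0 <= det_defect x.
Proof.
move=> x1.
have psd w1 w2 : 0 <= hform (defect11 x) (defect12 x) (defect22 x) w1 w2.
  have := hform_defect x (col2 w1 w2); rewrite !mxE /= => ->.
  by have := @vnorm2_mulmx_le x (col2 w1 w2); rewrite x1 expr1n mul1r subr_ge0 oner_neq0; apply.
have [h11 h22 h12] := hform_psd psd.
by rewrite tr_defectE det_defectE subr_ge0 addr_ge0.
Qed.

Lemma opnorm_lt1 x : 0 < tr_defect x -> 0 < det_defect x -> opnorm x < 1.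
Proof.
move=> t_gt0 d_gt0; set t := tr_defect x; set d := det_defect x.
set k := Num.max 0 (1 - d / t).
apply: (le_lt_trans (@opnorm_le x k _ _)).
- by rewrite le_max lexx.
- move=> u; apply: (@le_trans _ _ ((1 - d / t) * vnorm2 u)); last first.
    by rewrite ler_wpM2r ?vnorm2_ge0 // le_max lexx orbT.
  have := hform_ge (defect11 x) (defect12 x) (defect22 x) (u 0 0) (u 1 0).
  rewrite -tr_defectE -det_defectE hform_defect -/t -/d -/(vnorm2 u) => h.
  have : d / t * vnorm2 u <= vnorm2 u - vnorm2 (x *m u).
    by rewrite mulrAC ler_pdivrMr // [_ * t]mulrC.
  lra.
- by rewrite -sqrtr1 ltr_sqrt // gt_max ltr01 /= ltrBlDr ltrDl divr_gt0.
Qed.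

Lemma frob2_tr x : frob2 x^T = frob2 x.
Proof. by rewrite /frob2 !mxE; ring. Qed.

Lemma piT_tr x : piT x^T = piT x.
Proof. by rewrite /piT det_tr !mxE. Qed.

(* conjugation by [diag(1, s)] *)
Definition rescale (s : R) (x : 'M[C]_2) : 'M[C]_2 :=
  mx22 (x 0 0) (s%:C * x 0 1) (s^-1%:C * x 1 0) (x 1 1).

Lemma piT_rescale s x : s != 0 -> piT (rescale s x) = piT x.
Proof.
move=> s_neq0; rewrite piT_mx22 /piT det_mx2.
by rewrite mulrACA -rmorphM mulfV // rmorph1 mul1r.
Qed.

Lemma scaled_sum_lt (p q : R) : 0 <= p -> 0 <= q -> p != q ->
  exists2 t, 0 < t & t * p + t^-1 * q < p + q.
Proof.
move=> p_ge0 q_ge0 pq; have [p_gt0|p_le0] := ltrP 0 p; last first.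
  have p0 : p = 0 by apply/eqP; rewrite eq_le p_le0 p_ge0.
  have q_gt0 : 0 < q by rewrite lt0r q_ge0 andbT eq_sym -p0.
  by exists 2 => //; rewrite p0; lra.
have pq_gt0 : 0 < p + q by lra.
exists ((p + q) / (2 * p)); first by rewrite divr_gt0 // mulr_gt0.
rewrite -subr_gt0.
have -> : p + q - ((p + q) / (2 * p) * p + ((p + q) / (2 * p))^-1 * q) =
    (p - q) ^+ 2 / (2 * (p + q)).
  by field; rewrite !gt_eqF // mulr_gt0.
apply: divr_gt0; last by rewrite mulr_gt0.
by rewrite exprn_even_gt0 //= subr_eq0.
Qed.

Lemma rescale_frob2_lt x : normc2 (x 0 1) != normc2 (x 1 0) ->
  exists2 s, 0 < s & frob2 (rescale s x) < frob2 x.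
Proof.
move=> neq; have [t t_gt0 ht] := scaled_sum_lt (normc2_ge0 _) (normc2_ge0 _) neq.
exists (Num.sqrt t); first by rewrite sqrtr_gt0.
rewrite /frob2 !mxE /= !normc2_scale exprVn sqr_sqrtr ?ltW //; lra.
Qed.

Definition cont_at (f : T3 -> R) z0 := forall e, 0 < e ->
  exists2 d, 0 < d & forall z, dist3 z0 z < d -> `|f z - f z0| < e.

Definition ccont_at (g : T3 -> C) z0 := cont_at (Re \o g) z0 /\ cont_at (Im \o g) z0.

Lemma cont_at_ext f g z0 : f =1 g -> cont_at f z0 -> cont_at g z0.
Proof.
move=> fg hf e e_gt0; have [d d_gt0 hd] := hf e e_gt0.
by exists d => // z /hd; rewrite !fg.
Qed.

Lemma cont_at_lip f z0 : (forall z, `|f z0 - f z| <= dist3 z0 z) -> cont_at f z0.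
Proof. by move=> lip e e_gt0; exists e => // z; rewrite distrC; apply: le_lt_trans. Qed.

Lemma cont_at_cst k z0 : cont_at (fun=> k) z0.
Proof. by move=> e e_gt0; exists 1 => // z _; rewrite subrr normr0. Qed.

Lemma cont_atN f z0 : cont_at f z0 -> cont_at (fun z => - f z) z0.
Proof.
move=> hf e e_gt0; have [d d_gt0 hd] := hf e e_gt0.
by exists d => // z /hd; rewrite -opprD normrN.
Qed.

Lemma cont_atD f g z0 : cont_at f z0 -> cont_at g z0 -> cont_at (fun z => f z + g z) z0.
Proof.
move=> hf hg e e_gt0; have e2_gt0 : 0 < e / 2 by rewrite divr_gt0.
have [d1 d1_gt0 h1] := hf _ e2_gt0; have [d2 d2_gt0 h2] := hg _ e2_gt0.
exists (Num.min d1 d2) => [|z]; first by rewrite lt_min d1_gt0.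
rewrite lt_min => /andP[/h1 lt1 /h2 lt2].
rewrite opprD addrACA (le_lt_trans (ler_normD _ _)) //; lra.
Qed.

Lemma cont_atM f g z0 : cont_at f z0 -> cont_at g z0 -> cont_at (fun z => f z * g z) z0.
Proof.
move=> hf hg e e_gt0.
set K := 1 + `|f z0| + `|g z0|.
have K_gt0 : 0 < K by rewrite /K -addrA ltr_pwDl // addr_ge0.
set eta := Num.min 1 (e / K).
have eta_gt0 : 0 < eta by rewrite lt_min ltr01 divr_gt0.
have eta_le1 : eta <= 1 by rewrite ge_min lexx.
have etaK : eta * K <= e by rewrite -ler_pdivlMr // ge_min lexx orbT.
have [d1 d1_gt0 h1] := hf _ eta_gt0; have [d2 d2_gt0 h2] := hg _ eta_gt0.
exists (Num.min d1 d2) => [|z]; first by rewrite lt_min d1_gt0.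
rewrite lt_min => /andP[/h1 lt1 /h2 lt2].
have -> : f z * g z - f z0 * g z0 =
    (f z - f z0) * (g z - g z0) + (f z - f z0) * g z0 + f z0 * (g z - g z0) by ring.
apply: le_lt_trans (ler_normD _ _) _; rewrite normrM.
apply: le_lt_trans (lerD (ler_normD _ _) (lexx _)) _; rewrite !normrM.
move: (normr_ge0 (f z - f z0)) (normr_ge0 (g z - g z0)).
move: (normr_ge0 (f z0)) (normr_ge0 (g z0)) etaK; rewrite /K; nra.
Qed.

Lemma cont_at_gt0 f z0 : cont_at f z0 -> 0 < f z0 ->
  exists2 d, 0 < d & forall z, dist3 z0 z < d -> 0 < f z.
Proof.
move=> hf f_gt0; have [d d_gt0 hd] := hf _ f_gt0.
by exists d => // z /hd; rewrite ltr_norml; lra.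
Qed.

Lemma Re_Im_le_cabs (w : C) : `|Re w| <= cabs w /\ `|Im w| <= cabs w.
Proof.
by rewrite /cabs -!sqrtr_sqr !ler_sqrt ?addr_ge0 ?sqr_ge0 // lerDl lerDr !sqr_ge0.
Qed.

Lemma ccont_at_lip g z0 : (forall z, cabs (g z0 - g z) <= dist3 z0 z) -> ccont_at g z0.
Proof.
move=> lip; split; apply: cont_at_lip => z /=; apply: le_trans (lip z).
  by have [+ _] := Re_Im_le_cabs (g z0 - g z); case: (g z0) (g z) => [? ?] [? ?].
by have [_ +] := Re_Im_le_cabs (g z0 - g z); case: (g z0) (g z) => [? ?] [? ?].
Qed.

Lemma ccont_at_coord1 z0 : ccont_at (fun z => z.1.1) z0.
Proof. by apply: ccont_at_lip => z; rewrite le_max lexx. Qed.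

Lemma ccont_at_coord2 z0 : ccont_at (fun z => z.1.2) z0.
Proof. by apply: ccont_at_lip => z; rewrite !le_max lexx orbT. Qed.

Lemma ccont_at_coord3 z0 : ccont_at (fun z => z.2) z0.
Proof. by apply: ccont_at_lip => z; rewrite !le_max lexx !orbT. Qed.

Lemma ccont_at_cst k z0 : ccont_at (fun=> k) z0.
Proof. by split; apply: cont_at_cst. Qed.

Lemma ccont_atN g z0 : ccont_at g z0 -> ccont_at (fun z => - g z) z0.
Proof.
by case=> [hre him]; split; [move: hre | move: him];
  move=> /cont_atN; apply: cont_at_ext => z /=; case: (g z).
Qed.

Lemma ccont_atD g h z0 : ccont_at g z0 -> ccont_at h z0 -> ccont_at (fun z => g z + h z) z0.
Proof.
case=> [gre gim] [hre him]; split; [move: (cont_atD gre hre) | move: (cont_atD gim him)];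
  by apply: cont_at_ext => z /=; case: (g z) (h z) => [? ?] [? ?].
Qed.

Lemma ccont_atM g h z0 : ccont_at g z0 -> ccont_at h z0 -> ccont_at (fun z => g z * h z) z0.
Proof.
case=> [gre gim] [hre him]; split.
  move: (cont_atD (cont_atM gre hre) (cont_atN (cont_atM gim him))).
  by apply: cont_at_ext => z /=; case: (g z) (h z) => [? ?] [? ?].
move: (cont_atD (cont_atM gre him) (cont_atM gim hre)).
by apply: cont_at_ext => z /=; case: (g z) (h z) => [? ?] [? ?].
Qed.

Lemma cont_at_normc2 g z0 : ccont_at g z0 -> cont_at (fun z => normc2 (g z)) z0.
Proof.
case=> [gre gim]; move: (cont_atD (cont_atM gre gre) (cont_atM gim gim)).
by apply: cont_at_ext => z; rewrite /normc2 !expr2.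
Qed.

Local Ltac cont_at_poly := repeat match goal with
  | |- cont_at (fun _ => ?k) _ => apply: cont_at_cst
  | |- ccont_at (fun _ => ?k) _ => apply: ccont_at_cst
  | |- ccont_at (fun z => z.1.1) _ => apply: ccont_at_coord1
  | |- ccont_at (fun z => z.1.2) _ => apply: ccont_at_coord2
  | |- ccont_at snd _ => apply: ccont_at_coord3
  | |- cont_at (fun _ => normc2 _) _ => apply: cont_at_normc2
  | |- cont_at (fun _ => _ + _) _ => apply: cont_atD
  | |- cont_at (fun _ => - _) _ => apply: cont_atN
  | |- ccont_at (fun _ => _ + _) _ => apply: ccont_atD
  | |- ccont_at (fun _ => - _) _ => apply: ccont_atN
  | |- ccont_at (fun _ => _ * _) _ => apply: ccont_atM
  end.

Lemma tetrablock_interior01 x : 0 < tr_defect x -> 0 < det_defect x -> x 0 1 != 0 ->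
  interior3 (@tetrablock R) (piT x).
Proof.
move=> t_gt0 d_gt0 b_neq0; set b := x 0 1.
(* [y] is a continuous right inverse of [piT] with [y (piT x) = x], so the
   defects of [y z] stay positive for [z] near [piT x] *)
pose y z := mx22 z.1.1 b ((z.1.1 * z.1.2 - z.2) / b) z.1.2.
have piTy z : piT (y z) = z.
  by case: z => [[? ?] ?]; rewrite piT_mx22 /=; congr (_, _, _); field.
have dety z : \det (y z) = z.2 := congr1 snd (piTy z).
have yx : y (piT x) = x.
  by rewrite /y /= det_mx2 -/b (_ : _ / b = x 1 0) ?mx22_entries //; field.
pose F z := normc2 z.1.1 + normc2 b + normc2 ((z.1.1 * z.1.2 - z.2) / b) + normc2 z.1.2.
have frob2y z : frob2 (y z) = F z by rewrite /frob2 !mxE.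
have c1 : cont_at (fun z => tr_defect (y z)) (piT x).
  apply: (@cont_at_ext (fun z => 2 - F z)) => [z|]; first by rewrite /tr_defect frob2y.
  by rewrite /F; cont_at_poly.
have c2 : cont_at (fun z => det_defect (y z)) (piT x).
  apply: (@cont_at_ext (fun z => 1 - F z + normc2 z.2)) => [z|].
    by rewrite /det_defect frob2y dety.
  by rewrite /F; cont_at_poly.
rewrite -yx in t_gt0 d_gt0.
have [e1 e1_gt0 h1] := cont_at_gt0 c1 t_gt0.
have [e2 e2_gt0 h2] := cont_at_gt0 c2 d_gt0.
exists (Num.min e1 e2); split => [|z]; first by rewrite lt_min e1_gt0.
rewrite lt_min => /andP[/h1 z1 /h2 z2].
by exists (y z); [apply: opnorm_lt1 | apply: piTy].
Qed.

Lemma tetrablock_interior x : 0 < tr_defect x -> 0 < det_defect x ->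
  x 0 1 != 0 \/ x 1 0 != 0 -> interior3 (@tetrablock R) (piT x).
Proof.
move=> t_gt0 d_gt0 [b_neq0|c_neq0]; first exact: tetrablock_interior01.
rewrite -piT_tr; apply: tetrablock_interior01; rewrite ?mxE //.
  by rewrite /tr_defect frob2_tr.
by rewrite /det_defect frob2_tr det_tr.
Qed.

End Tetrablock.

Unset Implicit Arguments.
Theorem lemma9 (R : realType) (v : 'M[R[i]]_2) :
  opnorm v = 1 ->
  boundary3 (@tetrablock R) (piT v) ->
  cabs (v 0 1) = cabs (v 1 0).
Proof.
move=> v1 [_ not_interior]; apply: contrapT => cabs_neq.
have neq : normc2 (v 0 1) != normc2 (v 1 0).
  by apply/eqP => eq; apply: cabs_neq; rewrite !cabsE eq.
have [tr_ge0 det_ge0] := opnorm1_defects_ge0 v1.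
have [s s_gt0 frob2_lt] := rescale_frob2_lt neq.
have piT_s : piT (rescale s v) = piT v by rewrite piT_rescale // gt_eqF.
have det_s : \det (rescale s v) = \det v := congr1 snd piT_s.
apply: not_interior; rewrite -piT_s; apply: tetrablock_interior.
- by move: tr_ge0; rewrite /tr_defect; lra.
- by move: det_ge0; rewrite /det_defect det_s; lra.
- rewrite !mxE /= !mulf_eq0 !fmorph_eq0 invr_eq0 gt_eqF //=.
  apply/orP; rewrite -negb_and; apply: contra neq => /andP[/eqP-> /eqP->].
  by rewrite normc2_0.
Qed.
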